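(* Let $q$ be a power of an odd prime, let $E$ be an elliptic curve over $\mathbb{F}_q$ with a rational point $O$, and let $D\subset E(\mathbb{F}_q)\setminus\{O\}$ be a set of rational points with $n=|D|$. For an integer $k$ with $2\leq k\leq n-2$, let $C$ be either $C_{\Omega}(D,kO)$ or $C_{\mathcal{L}}(D,kO)$. Then the covering radius of $C$ equals either $n-\dim(C)-1$ or $n-\dim(C)$.
   Context: An elliptic curve $E$ over $\mathbb{F}_q$ is a geometrically irreducible smooth projective curve of genus $1$; $E(\mathbb{F}_q)$ denotes its rational points. For a divisor $V$, $\mathcal{L}(V)=\{f\in\mathbb{F}_q(E)^*:\mathrm{div}(f)\geq -V\}\cup\{0\}$ and $\Omega(V)$ is the space of Weil differentials $\omega$ with $\mathrm{div}(\omega)\geq V$, together with $0$. For $D=\{P_1,\dots,P_n\}\subset E(\mathbb{F}_q)$ (also viewed as the divisor $P_1+\dots+P_n$) and a divisor $G$ with support disjoint from $D$: $C_{\mathcal{L}}(D,G)=\{(f(P_1),\dots,f(P_n)):f\in\mathcal{L}(G)\}$ and $C_{\Omega}(D,G)=\{(\mathrm{res}_{P_1}(\omega),\dots,\mathrm{res}_{P_n}(\omega)):\omega\in\Omega(G-D)\}$; these two codes are dual to each other. The covering radius of a linear code $C\subseteq\mathbb{F}_q^n$ is $\rho(C)=\max_{u\in\mathbb{F}_q^n}\min_{c\in C}d(u,c)$, where $d$ is the Hamming distance. *)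

From HB Require Import structures.
From mathcomp Require Import all_boot all_order all_algebra.
Set Implicit Arguments. Unset Strict Implicit. Unset Printing Implicit Defensive.
Import Order.TTheory GRing.Theory Num.Theory.
Local Open Scope ring_scope.

Section EllipticCodes.
Variable F : finFieldType.

(* Elliptic curve over F (odd characteristic) in Weierstrass form
   y^2 = f(x), f monic cubic with no repeated root (nonsingular);
   the distinguished rational point O is the point at infinity. *)
Definition elliptic_poly (f : {poly F}) : bool :=
  [&& size f == 4%N, f \is monic & coprimep f f^`()].

Definition on_curve (f : {poly F}) (P : F * F) : bool := P.2 ^+ 2 == f.[P.1].

Definition ev_fun (a b : {poly F}) (P : F * F) : F := a.[P.1] + b.[P.1] * P.2.

(* L(kO) = { a(x) + b(x) y : 2 deg a <= k, 2 deg b + 3 <= k }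
   (x has pole order 2 and y pole order 3 at O).  It is spanned by the
   monomials x^i (2i <= k) and x^i y (2i+3 <= k), i <= k.  Generator
   matrix of C_L(D,kO) (rows = evaluations of these spanning functions;
   rows for monomials outside L(kO) are zero). *)
Definition genL (D : seq (F * F)) (k : nat) : 'M[F]_(k.+1 + k.+1, size D) :=
  col_mx
    (\matrix_(i < k.+1, l < size D)
       if (2 * i <= k)%N then ev_fun 'X^i 0 (nth (0, 0) D l) else 0)
    (\matrix_(i < k.+1, l < size D)
       if (2 * i + 3 <= k)%N then ev_fun 0 'X^i (nth (0, 0) D l) else 0).

(* Codes as square matrices whose row space is the code. *)
Definition code_L (D : seq (F * F)) (k : nat) : 'M[F]_(size D) :=
  <<genL D k>>%MS.

(* C_Omega(D,kO) is the dual of C_L(D,kO): { u | u . c = 0 for all c in C_L }. *)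
Definition code_Omega (D : seq (F * F)) (k : nat) : 'M[F]_(size D) :=
  kermx (genL D k)^T.

Definition hamming {n : nat} (u v : 'rV[F]_n) : nat := #|[set i | u 0 i != v 0 i]|.

Definition covering_radius {n : nat} (C : 'M[F]_n) : nat :=
  \max_(u : 'rV[F]_n) \big[minn/n]_(c : 'rV[F]_n | (c <= C)%MS) hamming u c.

End EllipticCodes.

From HB Require Import structures.
From mathcomp Require Import all_boot all_order all_algebra.
From mathcomp Require Import ring zify.
Set Implicit Arguments. Unset Strict Implicit. Unset Printing Implicit Defensive.
Import Order.TTheory GRing.Theory.
Local Open Scope ring_scope.

(* The redundancy bound gives covering radius <= n - dim C.  For the lower
   bounds, write the functions of L(kO) as a(x) + b(x) y.  A nonzero one has at
   most k zeros among the points of D: its norm a^2 - b^2 f has degree at most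
   k + 1 and vanishes at the x-coordinates of the zeros, doubly when (x, y) and
   (x, -y) are both zeros.  Hence the evaluation of a function of exact pole
   order k + 1 is at distance at least n - k - 1 from C_L.  For C_Omega, take u
   with <u, ev h> equal to the top coefficient of h; if u - c vanished outside a
   set S of k - 2 points, a function h of exact pole order k vanishing on S
   would give 0 = <u - c, ev h> <> 0.  Such an h exists because the curve has
   genus 1: no function has a single simple pole. *)

(* lia treats two occurrences of [size p] as distinct atoms when they carry
   different (convertible) structure instances, so abstract them first. *)
Ltac size_lia :=
  repeat match goal with H : context [size _] |- _ => revert H end;
  repeat match goal with |- context [size ?p] =>
    let s := fresh "s" in move: (size p) => s end;
  intros; lia.

Lemma max_poly_roots_mup (F : fieldType) (p : {poly F}) (s : seq F) :
  p != 0 -> (forall x, count_mem x s <= mup x p)%N -> (size s < size p)%N.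
Proof.
elim: s p => [|x s IHs] p p_neq0 s_le_mup; first by rewrite size_poly_gt0.
have /dvdpP [q def_p] : 'X - x%:P %| p.
  by rewrite XsubC_dvd // (leq_trans _ (s_le_mup x)) //= eqxx.
have q_neq0 : q != 0 by apply: contraNneq p_neq0 => q0; rewrite def_p q0 mul0r.
rewrite def_p size_mul ?polyXsubC_eq0 // size_XsubC addn2 ltnS.
apply: IHs => // y; have := s_le_mup y.
rewrite def_p mupM ?polyXsubC_eq0 // -['X - _]expr1 mup_XsubCX /=.
by case: (x == y); rewrite ?addn0 // add1n addn1.
Qed.

Lemma size_subr_neq (R : idomainType) (p q : {poly R}) :
  size p != size q -> size (p - q) = maxn (size p) (size q).
Proof.
case: ltngtP => // [lt_pq | lt_qp] _.
  by rewrite addrC size_polyDl size_polyN ?(maxn_idPr (ltnW lt_pq)).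
by rewrite size_polyDl ?size_polyN ?(maxn_idPl (ltnW lt_qp)).
Qed.

Lemma size_poly_leqSE (R : nzRingType) (p : {poly R}) N :
  (size p <= N.+1)%N && (p`_N == 0) = (size p <= N)%N.
Proof.
apply/idP/idP => [/andP [le_p_N1 /eqP pN0] | le_p_N].
  apply/leq_sizeP => j; rewrite leq_eqVlt => /orP [/eqP<- // | ].
  by move/leq_sizeP: le_p_N1; apply.
by rewrite (leqW le_p_N) /= (leq_sizeP _ _ le_p_N).
Qed.

Lemma nonzero_left_kernel (F : fieldType) m c (A : 'M[F]_(m, c)) :
  (c < m)%N -> exists2 v : 'rV_m, v != 0 & v *m A = 0.
Proof.
move=> c_lt_m; exists (nz_row (kermx A)); last exact/sub_kermxP/nz_row_sub.
rewrite nz_row_eq0 kermx_eq0 /row_free; apply: contraTneq c_lt_m => <-.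
by rewrite -leqNgt rank_leq_col.
Qed.

Lemma exists_superset_card (T : finType) (A : {set T}) m :
  (#|A| <= m <= #|T|)%N -> exists2 B : {set T}, A \subset B & #|B| = m.
Proof.
elim: m => [|m IHm] /andP [le_A_m le_m_T].
  by exists A => //; apply/eqP; rewrite -leqn0.
have [eq_A | ne_A] := eqVneq #|A| m.+1; first by exists A.
have [|B sAB card_B] := IHm; first by rewrite -ltnS ltn_neqAle ne_A le_A_m ltnW.
have /card_gt0P [x] : (0 < #|~: B|)%N by rewrite cardsCs setCK card_B subn_gt0.
rewrite inE => xB; exists (x |: B); first exact: subset_trans sAB (subsetUr _ _).
by rewrite cardsU1 xB card_B.
Qed.

Section CoveringRadius.
Variables (F : finFieldType) (n : nat).
Implicit Types (C : 'M[F]_n) (u : 'rV[F]_n).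

Lemma covering_radius_ge C u r :
  (r <= n)%N -> (forall c, (c <= C)%MS -> r <= hamming u c)%N ->
  (r <= covering_radius C)%N.
Proof.
move=> r_le_n far_u; apply: leq_trans (leq_bigmax u).
by elim/big_ind: _ => // x y r_le_x r_le_y; rewrite leq_min r_le_x r_le_y.
Qed.

(* u agrees with a codeword on an information set of rank C coordinates. *)
Lemma covering_radius_le C : (covering_radius C <= n - \rank C)%N.
Proof.
apply/bigmax_leqP => u _; pose g := maxrankfun C^T.
have full_g : row_full (rowsub g C^T)^T.
  by rewrite /row_full mxrank_tr; apply: maxrowsub_free.
have /submxP [z u_g] := submx_full (\row_j u 0 (g j)) full_g.
have agree j : u 0 (g j) = (z *m C) 0 (g j).
  by move/rowP/(_ j): u_g; rewrite !mxE => ->; apply: eq_bigr => i _; rewrite !mxE.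
apply: leq_trans (_ : hamming u (z *m C) <= _)%N.
  by rewrite -minEnat; apply: (bigmin_le_cond (T := nat)); apply: submxMl.
have : [set i | u 0 i != (z *m C) 0 i] \subset ~: [set g j | j in 'I_(\rank C^T)].
  by apply/subsetP => i; rewrite !inE; apply: contra => /imsetP [j _ ->]; rewrite agree.
move/subset_leq_card/leq_trans; apply.
by rewrite cardsCs setCK card_imset ?card_ord ?mxrank_tr //; apply: maxrankfun_inj.
Qed.

End CoveringRadius.

Section CurveFunctions.
Variable F : finFieldType.

Lemma on_curve_fst_eq (f : {poly F}) (P Q : F * F) :
  on_curve f P -> on_curve f Q -> P.1 = Q.1 -> Q = P \/ Q = (P.1, - P.2).
Proof.
case: P Q => x y [x' y'] /eqP/= Pf /eqP/= Qf /= xx'; subst x'.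
have : y' ^+ 2 == y ^+ 2 by rewrite Pf Qf.
by rewrite eqf_sqr => /orP [/eqP-> | /eqP->]; [left | right].
Qed.

Lemma max_curve_roots (f p : {poly F}) (T : seq (F * F)) :
  p != 0 -> uniq T -> all (on_curve f) T ->
  {in T, forall P, root p P.1} ->
  {in T, forall P, (P.1, - P.2) \in T -> (P.1, - P.2) != P ->
     ('X - P.1%:P) ^+ 2 %| p} ->
  (size T < size p)%N.
Proof.
move=> p_neq0 uT /allP onT rootT root2T.
rewrite -(size_map fst); apply: max_poly_roots_mup => // x; rewrite count_map.
have [[P PT /eqP Px] | noP] := altP (@hasP _ (fun P => P.1 == x) T); last first.
  by move: noP; rewrite has_count lt0n negbK => /eqP->.
set Q := (P.1, - P.2); rewrite -Px.
pose fiber := if (Q \in T) && (Q != P) then [:: P; Q] else [:: P].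
have : (count (fun R => R.1 == P.1) T <= size fiber)%N.
  rewrite -size_filter; apply: uniq_leq_size; first exact: filter_uniq.
  move=> R; rewrite mem_filter => /andP [/eqP RP RT].
  have [->|RQ] := on_curve_fst_eq (onT P PT) (onT R RT) (esym RP).
    by rewrite /fiber; case: ifP; rewrite !inE eqxx.
  move: RT; rewrite RQ -/Q => QT; rewrite /fiber QT /=.
  by case: eqVneq => [->|_]; rewrite !inE eqxx ?orbT.
move/leq_trans; apply; rewrite /fiber; case: ifP => [/andP [QT QP] | _].
  by rewrite mup_geq // root2T.
by rewrite -XsubC_dvd // dvdp_XsubCl rootT.
Qed.

Definition adim m := m./2.+1.
Definition bdim m := m.-1./2.

Lemma adim_bdim m : (0 < m)%N -> (adim m + bdim m)%N = m.
Proof. by rewrite /adim /bdim; lia. Qed.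

(* L(mO) in the affine coordinate ring: a + b y with 2 deg a <= m and
   2 deg b + 3 <= m, as x and y have pole orders 2 and 3 at O. *)
Definition Lspace (m : nat) (a b : {poly F}) : bool :=
  (size a <= adim m)%N && (size b <= bdim m)%N.

(* The coefficient of the monomial of pole order m, x^(m/2) or x^((m-3)/2) y;
   it is 0 for m = 1, as there is no such monomial. *)
Definition pole_coef (m : nat) (a b : {poly F}) : F :=
  if odd m then (if (3 <= m)%N then b`_(m./2.-1) else 0) else a`_(m./2).

Lemma LspaceS_pole_coef_eq0 m a b :
  Lspace m.+1 a b && (pole_coef m.+1 a b == 0) = Lspace m a b.
Proof.
rewrite /Lspace /adim /bdim /pole_coef /= uphalf_half.
case m_odd: (odd m) => /=; rewrite ?add1n ?add0n.
  by rewrite andbAC size_poly_leqSE; congr (andb (_ <= _.+1)%N _); lia.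
case: (posnP m) => [-> | m_gt0]; first by rewrite eqxx andbT.
have m_ge2 : (2 < m.+1)%N by lia.
have -> : m./2.-1 = m.-1./2 by lia.
have -> : m./2 = (m.-1./2).+1 by lia.
by rewrite m_ge2 -andbA size_poly_leqSE.
Qed.

Lemma ev_fun_conj_eq0 (a b : {poly F}) (x y : F) :
  ev_fun a b (x, y) = 0 -> ev_fun a b (x, - y) = 0 -> (x, - y) != (x, y) ->
  ('X - x%:P %| a) && ('X - x%:P %| b).
Proof.
rewrite /ev_fun !dvdp_XsubCl /root /= => ev_y ev_Ny Ny_neq_y.
have yy_neq0 : y + y != 0.
  by apply: contra Ny_neq_y; rewrite addr_eq0 => /eqP <-.
have : b.[x] * (y + y) = (a.[x] + b.[x] * y) - (a.[x] + b.[x] * - y) by ring.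
rewrite ev_y ev_Ny subr0 => /eqP; rewrite mulf_eq0 (negPf yy_neq0) orbF => /eqP b_x.
by rewrite b_x mul0r addr0 in ev_y; rewrite ev_y b_x eqxx.
Qed.

Lemma size_zeros_Lspace (f a b : {poly F}) m (T : seq (F * F)) :
  size f = 4%N -> Lspace m a b -> (a != 0) || (b != 0) ->
  uniq T -> all (on_curve f) T -> {in T, forall P, ev_fun a b P = 0} ->
  (size T <= m)%N.
Proof.
move=> size_f /andP [size_a size_b] ab_neq0 uT onT zT.
rewrite /adim /bdim in size_a size_b.
set N := a * a - b * b * f.
suff [N_neq0 size_N] : N != 0 /\ (size N <= m.+1)%N.
  rewrite -ltnS; apply: leq_trans size_N; apply: (max_curve_roots N_neq0 uT onT).
    move=> [x y] /[dup] /(allP onT) /eqP /= y2 /zT.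
    rewrite /ev_fun /root /N /= !hornerE -y2 => /eqP; rewrite addr_eq0 => /eqP->.
    by apply/eqP; ring.
  move=> [x y] /zT ev_y /zT ev_Ny Ny_neq_y /=.
  have /andP [dv_a dv_b] := ev_fun_conj_eq0 ev_y ev_Ny Ny_neq_y.
  by rewrite expr2; apply: dvdp_sub; [exact: dvdp_mul | exact/dvdp_mulr/dvdp_mul].
have size_aa : size (a * a) = (size a).*2.-1.
  have [-> | a_neq0] := eqVneq a 0; first by rewrite mul0r size_poly0.
  by rewrite size_mul // addnn.
have [b0 | b_neq0] := eqVneq b 0.
  have : (0 < size a)%N by rewrite size_poly_gt0; rewrite b0 eqxx orbF in ab_neq0.
  by rewrite /N b0 !mul0r subr0 -size_poly_gt0 size_aa; size_lia.
have size_bbf : size (b * b * f) = (size b).*2.+2.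
  have f_neq0 : f != 0 by rewrite -size_poly_gt0 size_f.
  have : (0 < size b)%N by rewrite size_poly_gt0.
  by rewrite !size_mul ?mulf_neq0 // size_f; size_lia.
have : (0 < size b)%N by rewrite size_poly_gt0.
rewrite -size_poly_gt0 /N size_subr_neq size_aa size_bbf; size_lia.
Qed.

Lemma Lspace_exact_size m a b :
  Lspace m a b -> ~~ Lspace m.-1 a b ->
  if odd m then size b = m./2 /\ (0 < m./2)%N /\ (size a <= m./2.+1)%N
  else size a = m./2.+1 /\ (size b <= m./2.-1)%N.
Proof.
rewrite /Lspace /adim /bdim; move: (size a) (size b) => sa sb.
by case: ifP => m_odd; lia.
Qed.

(* Otherwise h / h0 would have a single simple pole, where h0 = a0 + b0 y and
   h = a + b y; w is, up to sign, the y-coefficient of h0 * conj h. *)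
Lemma no_common_zeros_consecutive_poles (f a0 b0 a b : {poly F}) m
    (T : seq (F * F)) :
  size f = 4%N ->
  Lspace m a0 b0 -> ~~ Lspace m.-1 a0 b0 -> Lspace m.+1 a b -> ~~ Lspace m a b ->
  uniq T -> all (on_curve f) T -> (m <= size T)%N ->
  {in T, forall P, ev_fun a0 b0 P = 0} -> {in T, forall P, ev_fun a b P = 0} ->
  False.
Proof.
move=> size_f L0 nL0 L nL uT onT m_le_T zT0 zT.
set w := a0 * b - a * b0.
have size_mulE (p q : {poly F}) :
  (0 < size p)%N -> (0 < size q)%N -> size (p * q) = (size p + size q).-1.
  by rewrite !size_poly_gt0 => *; rewrite size_mul.
have [m_gt0 size_w] : (0 < m)%N /\ size w = m.
  move: (Lspace_exact_size L0 nL0) (Lspace_exact_size L nL).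
  move: (size_polyMleq a0 b) (size_polyMleq a b0) => /=.
  case m_odd: (odd m) => /=.
    move=> le_a0b _ [sb0 [half_gt0 sa0]] [sa sb].
    have size_ab0 : size (a * b0) = m by rewrite size_mulE; size_lia.
    by split; [lia | rewrite /w size_subr_neq size_ab0; size_lia].
  move=> _ le_ab0 [sa0 sb0] [sb [half_gt0 sa]].
  have size_a0b : size (a0 * b) = m by rewrite size_mulE; size_lia.
  by split; [lia | rewrite /w size_subr_neq size_a0b; size_lia].
have w_neq0 : w != 0 by rewrite -size_poly_gt0 size_w.
suff : (size T < size w)%N by rewrite size_w ltnNge m_le_T.
apply: (max_curve_roots w_neq0 uT onT).
  move=> [x y] /[dup] /zT0 + /zT; rewrite /ev_fun /root /w /= !hornerE.
  move=> /eqP; rewrite addr_eq0 => /eqP-> /eqP; rewrite addr_eq0 => /eqP->.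
  by apply/eqP; ring.
move=> [x y] /[dup] /zT0 ev0_y /zT ev_y /[dup] /zT0 ev0_Ny /zT ev_Ny Ny_neq_y /=.
have /andP [dv_a0 dv_b0] := ev_fun_conj_eq0 ev0_y ev0_Ny Ny_neq_y.
have /andP [dv_a dv_b] := ev_fun_conj_eq0 ev_y ev_Ny Ny_neq_y.
by rewrite expr2; apply: dvdp_sub; exact: dvdp_mul.
Qed.

Lemma LspaceB m a b a' b' :
  Lspace m a b -> Lspace m a' b' -> Lspace m (a - a') (b - b').
Proof.
move=> /andP [sa sb] /andP [sa' sb']; apply/andP; split;
  by apply: leq_trans (size_polyD _ _) _; rewrite size_polyN geq_max; apply/andP.
Qed.

Lemma pole_monomial m :
  (1 < m)%N -> exists a b : {poly F}, Lspace m a b /\ pole_coef m a b = 1.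
Proof.
rewrite /Lspace /pole_coef /adim /bdim => m_gt1; case m_odd: (odd m).
  exists 0, 'X^(m./2.-1); rewrite size_poly0 size_polyXn coefXn eqxx.
  by rewrite (_ : 3 <= m)%N; [split=> //; lia | lia].
by exists 'X^(m./2), 0; rewrite size_poly0 size_polyXn coefXn eqxx; split=> //; lia.
Qed.

Definition pair_linear (phi : {poly F} -> {poly F} -> F) :=
  forall c a b a' b', phi (c *: a + a') (c *: b + b') = c * phi a b + phi a' b'.

Lemma pair_linearB phi a b a' b' :
  pair_linear phi -> phi (a - a') (b - b') = phi a b - phi a' b'.
Proof.
move=> lin_phi; have := lin_phi (-1) a' b' a b.
by rewrite !scaleN1r mulN1r !(addrC (- _)).
Qed.

Lemma pair_linear_sum phi (I : finType) (c : I -> F) (a b : I -> {poly F}) :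
  pair_linear phi ->
  phi (\sum_i c i *: a i) (\sum_i c i *: b i) = \sum_i c i * phi (a i) (b i).
Proof.
move=> lin_phi; elim/big_rec3: _ => [|i A B s _ <-]; last exact: lin_phi.
by have := lin_phi (-1) 0 0 0 0; rewrite !scaler0 !addr0 mulN1r addNr.
Qed.

Lemma ev_fun_pair_linear P : pair_linear (fun a b => ev_fun a b P).
Proof. by move=> c a b a' b'; rewrite /ev_fun !(hornerD, hornerZ); ring. Qed.

Lemma pole_coef_pair_linear m : pair_linear (pole_coef m).
Proof.
move=> c a b a' b'; rewrite /pole_coef.
by case: ifP => _; [case: ifP => _ |]; rewrite ?coefD ?coefZ ?mulr0 ?addr0.
Qed.

Section Coordinates.
Variables p q : nat.
Implicit Type v : 'rV[F]_(p + q).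

Definition acoord v := rVpoly (lsubmx v).
Definition bcoord v := rVpoly (rsubmx v).

Lemma coords_neq0 v : v != 0 -> (acoord v != 0) || (bcoord v != 0).
Proof.
apply: contraNT; rewrite negb_or !negbK => /andP [/eqP a0 /eqP b0].
rewrite -[v]hsubmxK -[lsubmx v]rVpolyK -[rsubmx v]rVpolyK.
by rewrite -/(acoord v) -/(bcoord v) a0 b0 !linear0 row_mx0.
Qed.

Lemma acoord_lshift i : acoord (delta_mx 0 (lshift q i)) = 'X^i.
Proof. by rewrite /acoord delta_mx_lshift row_mxKl rVpoly_delta. Qed.

Lemma bcoord_lshift i : bcoord (delta_mx 0 (lshift q i)) = 0.
Proof. by rewrite /bcoord delta_mx_lshift row_mxKr linear0. Qed.

Lemma acoord_rshift i : acoord (delta_mx 0 (rshift p i)) = 0.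
Proof. by rewrite /acoord delta_mx_rshift row_mxKl linear0. Qed.

Lemma bcoord_rshift i : bcoord (delta_mx 0 (rshift p i)) = 'X^i.
Proof. by rewrite /bcoord delta_mx_rshift row_mxKr rVpoly_delta. Qed.

Lemma acoord_sum v : acoord v = \sum_k v 0 k *: acoord (delta_mx 0 k).
Proof.
rewrite /acoord {1}(row_sum_delta v) !linear_sum.
by apply: eq_bigr => k _; rewrite !linearZ.
Qed.

Lemma bcoord_sum v : bcoord v = \sum_k v 0 k *: bcoord (delta_mx 0 k).
Proof.
rewrite /bcoord {1}(row_sum_delta v) !linear_sum.
by apply: eq_bigr => k _; rewrite !linearZ.
Qed.

Definition coord_mx c (phi : 'I_c -> {poly F} -> {poly F} -> F) : 'M_(p + q, c) :=
  \matrix_(k, j) phi j (acoord (delta_mx 0 k)) (bcoord (delta_mx 0 k)).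

Lemma coord_mxE c (phi : 'I_c -> {poly F} -> {poly F} -> F) v j :
  (forall j, pair_linear (phi j)) ->
  (v *m coord_mx phi) 0 j = phi j (acoord v) (bcoord v).
Proof.
move=> lin_phi; rewrite mxE [acoord v]acoord_sum [bcoord v]bcoord_sum.
by rewrite pair_linear_sum //; apply: eq_bigr => k _; rewrite mxE.
Qed.

End Coordinates.

Lemma Lspace_coords m (v : 'rV[F]_(adim m + bdim m)) :
  Lspace m (acoord v) (bcoord v).
Proof. by rewrite /Lspace !size_poly. Qed.

End CurveFunctions.

Section Evaluation.
Variables (F : finFieldType) (f : {poly F}) (D : seq (F * F)).
Hypotheses (size_f : size f = 4%N) (uD : uniq D) (onD : all (on_curve f) D).
Local Notation n := (size D).
Local Notation Pt l := (nth (0, 0) D (l : 'I_n)).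

Lemma points_of_set (S : {set 'I_n}) :
  exists T, [/\ uniq T, all (on_curve f) T, size T = #|S|
              & forall P, P \in T -> exists2 l, l \in S & P = Pt l].
Proof.
exists [seq Pt l | l : 'I_n <- enum S]; split.
- rewrite map_inj_uniq ?enum_uniq // => i j /eqP.
  by rewrite nth_uniq // => /eqP /val_inj.
- by apply/allP => _ /mapP [l _ ->]; apply: (allP onD); apply: mem_nth.
- by rewrite size_map cardE.
- by move=> _ /mapP [l lS ->]; exists l; rewrite // -mem_enum.
Qed.

Lemma card_zeros_Lspace m a b (S : {set 'I_n}) :
  Lspace m a b -> (a != 0) || (b != 0) ->
  {in S, forall l, ev_fun a b (Pt l) = 0} -> (#|S| <= m)%N.
Proof.
move=> Lab ab_neq0 zS; have [T [uT onT <- inT]] := points_of_set S.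
by apply: (size_zeros_Lspace size_f Lab ab_neq0 uT onT) => _ /inT [l /zS + ->].
Qed.

Definition evmx k : 'M[F]_(adim k + bdim k, n) :=
  coord_mx (adim k) (bdim k) (fun l a b => ev_fun a b (Pt l)).

Lemma evmxE k v l : (v *m evmx k) 0 l = ev_fun (acoord v) (bcoord v) (Pt l).
Proof. by rewrite coord_mxE // => l'; apply: ev_fun_pair_linear. Qed.

Lemma evmx_free k : (k < n)%N -> row_free (evmx k).
Proof.
move=> k_lt_n; apply/inj_row_free => v vE0; apply/eqP.
apply: contraTT k_lt_n => v_neq0; rewrite -leqNgt -{1}(card_ord n) -cardsT.
apply: (card_zeros_Lspace (Lspace_coords v) (coords_neq0 v_neq0)) => l _.
by rewrite -evmxE vE0 mxE.
Qed.

Lemma genL_eqmx k : (genL D k :=: evmx k)%MS.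
Proof.
apply/eqmxP/andP; split; apply/row_subP => r; case: (split_ordP r) => i ->.
- rewrite /genL rowKu; have [le_i_k | lt_k_i] := leqP (2 * i) k.
    have i_lt : (i < adim k)%N by rewrite /adim; lia.
    rewrite (_ : row i _ = row (lshift _ (Ordinal i_lt)) (evmx k)) ?row_sub //.
    by apply/rowP => l; rewrite !mxE le_i_k acoord_lshift bcoord_lshift.
  by rewrite (_ : row i _ = 0) ?sub0mx //; apply/rowP => l; rewrite !mxE leqNgt lt_k_i.
- rewrite /genL rowKd; have [le_i_k | lt_k_i] := leqP (2 * i + 3) k.
    have i_lt : (i < bdim k)%N by rewrite /bdim; lia.
    rewrite (_ : row i _ = row (rshift _ (Ordinal i_lt)) (evmx k)) ?row_sub //.
    by apply/rowP => l; rewrite !mxE le_i_k acoord_rshift bcoord_rshift.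
  by rewrite (_ : row i _ = 0) ?sub0mx //; apply/rowP => l; rewrite !mxE leqNgt lt_k_i.
- have i_lt : (i < k.+1)%N by have := ltn_ord i; rewrite /adim; lia.
  rewrite (_ : row _ (evmx k) = row (lshift k.+1 (Ordinal i_lt)) (genL D k)) ?row_sub //.
  rewrite /genL rowKu; apply/rowP => l; rewrite !mxE acoord_lshift bcoord_lshift /=.
  by have := ltn_ord i; rewrite /adim => ?; rewrite ifT //; lia.
- have i_lt : (i < k.+1)%N by have := ltn_ord i; rewrite /bdim; lia.
  rewrite (_ : row _ (evmx k) = row (rshift k.+1 (Ordinal i_lt)) (genL D k)) ?row_sub //.
  rewrite /genL rowKd; apply/rowP => l; rewrite !mxE acoord_rshift bcoord_rshift /=.
  by have := ltn_ord i; rewrite /bdim => ?; rewrite ifT //; lia.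
Qed.

Lemma rank_genL k : (0 < k)%N -> (k < n)%N -> \rank (genL D k) = k.
Proof.
by move=> k_gt0 k_lt_n; rewrite genL_eqmx (eqP (evmx_free k_lt_n)) adim_bdim.
Qed.

Lemma exists_coords_vanishing p q (S : {set 'I_n}) (psi : {poly F} -> {poly F} -> F) :
  pair_linear psi -> (#|S|.+1 < p + q)%N ->
  exists2 v : 'rV_(p + q), v != 0 &
    {in S, forall l, ev_fun (acoord v) (bcoord v) (Pt l) = 0} /\
    psi (acoord v) (bcoord v) = 0.
Proof.
move=> lin_psi S_lt_pq.
pose A := row_mx (coord_mx p q (fun (j : 'I_#|S|) a b => ev_fun a b (Pt (enum_val j))))
                 (coord_mx p q (fun _ : 'I_1 => psi)).
have [|v v_neq0] := nonzero_left_kernel A; first by rewrite addn1.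
rewrite mul_mx_row => /eqP; rewrite row_mx_eq0 => /andP [/eqP vS /eqP v_psi].
exists v => //; split.
  move=> l lS; move/rowP: vS => /(_ (enum_rank_in lS l)).
  rewrite coord_mxE ?enum_rankK_in ?mxE // => j; exact: ev_fun_pair_linear.
by move/rowP: v_psi => /(_ 0); rewrite coord_mxE ?mxE.
Qed.

Lemma exists_pole_coef_neq0 k (S : {set 'I_n}) R :
  #|S| = k -> R \notin S ->
  exists2 v : 'rV_(adim k.+2 + bdim k.+2),
    {in S, forall l, ev_fun (acoord v) (bcoord v) (Pt l) = 0} &
    pole_coef k.+2 (acoord v) (bcoord v) != 0.
Proof.
move=> card_S RS.
have dim_k : (#|S|.+1 < adim k.+2 + bdim k.+2)%N by rewrite adim_bdim // card_S.
have [v1 v1_neq0 [zS1 zR1]] := exists_coords_vanishing (ev_fun_pair_linear (Pt R)) dim_k.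
have [top1 | ] := eqVneq (pole_coef k.+2 (acoord v1) (bcoord v1)) 0; last by exists v1.
have [v2 v2_neq0 [zS2 sub2]] := exists_coords_vanishing (pole_coef_pair_linear k.+1) dim_k.
have [top2 | ] := eqVneq (pole_coef k.+2 (acoord v2) (bcoord v2)) 0; last by exists v2.
exfalso.
have L1 : Lspace k.+1 (acoord v1) (bcoord v1).
  by rewrite -LspaceS_pole_coef_eq0 Lspace_coords top1 eqxx.
have L2 : Lspace k (acoord v2) (bcoord v2).
  rewrite -LspaceS_pole_coef_eq0 sub2 eqxx andbT.
  by rewrite -LspaceS_pole_coef_eq0 Lspace_coords top2 eqxx.
have nL1 : ~~ Lspace k (acoord v1) (bcoord v1).
  apply/negP => L1k; suff : (#|R |: S| <= k)%N by rewrite cardsU1 RS card_S ltnn.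
  by apply: (card_zeros_Lspace L1k (coords_neq0 v1_neq0)) => l /setU1P [-> | /zS1].
have k_gt0 : (0 < k)%N.
  move: L1 nL1; rewrite /Lspace /adim /bdim.
  by move: (size (acoord v1)) (size (bcoord v1)); lia.
have nL2 : ~~ Lspace k.-1 (acoord v2) (bcoord v2).
  apply/negP => /card_zeros_Lspace /(_ (coords_neq0 v2_neq0) zS2).
  by rewrite card_S; lia.
have [T [uT onT card_T inT]] := points_of_set S.
apply: (no_common_zeros_consecutive_poles size_f L2 nL2 L1 nL1 uT onT).
- by rewrite card_T card_S.
- by move=> _ /inT [l /zS2 + ->].
- by move=> _ /inT [l /zS1 + ->].
Qed.

Lemma covering_radius_L_ge k :
  (0 < k)%N -> (n - k.+1 <= covering_radius (code_L D k))%N.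
Proof.
move=> k_gt0; have [|a1 [b1 [L1 top1]]] := @pole_monomial F k.+1; first by rewrite ltnS.
apply: (covering_radius_ge (u := \row_l ev_fun a1 b1 (Pt l))) => [| c].
  exact: leq_subr.
rewrite /code_L genmxE genL_eqmx => /submxP [v ->].
have /andP [Lv pole_v] : Lspace k.+1 (acoord v) (bcoord v) &&
                         (pole_coef k.+1 (acoord v) (bcoord v) == 0).
  by rewrite LspaceS_pole_coef_eq0 Lspace_coords.
set a := a1 - acoord v; set b := b1 - bcoord v.
have top : pole_coef k.+1 a b = 1.
  rewrite /a /b pair_linearB ?top1 ?(eqP pole_v) ?subr0 //; exact: pole_coef_pair_linear.
have ab_neq0 : (a != 0) || (b != 0).
  apply: contraTT (oner_neq0 F) => /norP [/negPn/eqP a0 /negPn/eqP b0].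
  by rewrite negbK -top a0 b0 /pole_coef !coef0 !if_same.
set Z := [set l | ev_fun a b (Pt l) == 0].
have card_Z : (#|Z| <= k.+1)%N.
  by apply: (card_zeros_Lspace (LspaceB L1 Lv) ab_neq0) => l; rewrite inE => /eqP.
rewrite /hamming (_ : [set l | _] = ~: Z); first by rewrite cardsCs setCK card_ord leq_sub2l.
apply/setP => l; rewrite !inE mxE evmxE -subr_eq0 /a /b.
by have /= -> := pair_linearB a1 b1 (acoord v) (bcoord v) (ev_fun_pair_linear (Pt l)).
Qed.

Lemma covering_radius_Omega_ge k :
  (1 < k)%N -> (k < n)%N -> (k.-1 <= covering_radius (code_Omega D k))%N.
Proof.
case: k => [|[|k]] // _ k_lt_n.
have [B EB] := row_freeP (evmx_free k_lt_n).
pose t := coord_mx (adim k.+2) (bdim k.+2) (fun _ : 'I_1 => @pole_coef F k.+2).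
pose u := t^T *m B^T.
apply: (covering_radius_ge (u := u)) => [| c c_Omega]; first by lia.
have uE : u *m (evmx k.+2)^T = t^T by rewrite -mulmxA -trmx_mul EB trmx1 mulmx1.
have cE : c *m (evmx k.+2)^T = 0.
  have /submxP [X ->] : (evmx k.+2 <= genL D k.+2)%MS by rewrite genL_eqmx.
  by rewrite trmx_mul mulmxA (sub_kermxP c_Omega) mul0mx.
rewrite leqNgt /hamming; set S := [set l | _]; apply/negP => lt_dist.
have [|S' sSS' card_S'] := @exists_superset_card _ S k.+1; first by rewrite card_ord; lia.
have /subsetPn [R RS' RS] : ~~ (S' \subset S).
  by apply: contraTN lt_dist => /subset_leq_card; rewrite card_S' -leqNgt.
have [|v zS top] := @exists_pole_coef_neq0 k (S' :\ R) R _ (negbT (setD11 _ _)).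
  by move: card_S'; rewrite (cardsD1 R) RS' add1n => -[].
apply: (negP top); apply/eqP.
have <- : ((u - c) *m (v *m evmx k.+2)^T) 0 0 = pole_coef k.+2 (acoord v) (bcoord v).
  rewrite trmx_mul mulmxA mulmxBl uE cE subr0 -trmx_mul mxE coord_mxE //.
  by move=> _; apply: pole_coef_pair_linear.
rewrite mxE; apply: big1 => l _.
rewrite [_^T _ _]mxE evmxE [(u - c) _ _]mxE [(- c) _ _]mxE.
have [lS | ] := boolP (l \in S).
  by rewrite zS ?mulr0 // !inE (subsetP sSS') // andbT; apply: contraNneq RS => <-.
by rewrite inE negbK => /eqP ->; rewrite subrr mul0r.
Qed.

End Evaluation.

Theorem lemma3p1 (F : finFieldType) (f : {poly F}) (D : seq (F * F)) (k : nat)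
  (C : 'M[F]_(size D)) :
  odd #|F| ->
  elliptic_poly f ->
  uniq D -> all (on_curve f) D ->
  (2 <= k)%N -> (k <= size D - 2)%N ->
  C = code_Omega D k \/ C = code_L D k ->
  covering_radius C = (size D - \rank C - 1)%N \/
  covering_radius C = (size D - \rank C)%N.
Proof.
move=> _ /and3P [/eqP size_f _ _] uD onD k_ge2 k_le hC.
have k_lt_n : (k < size D)%N by lia.
have rank_k := rank_genL size_f uD onD (ltnW k_ge2) k_lt_n.
have upper := covering_radius_le C.
case: hC => C_def; rewrite C_def in upper *.
- have lower := covering_radius_Omega_ge size_f uD onD k_ge2 k_lt_n.
  have rank_Omega : \rank (code_Omega D k) = (size D - k)%N.
    by rewrite mxrank_ker mxrank_tr rank_k.
  by rewrite rank_Omega in upper *; lia.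
- have lower := covering_radius_L_ge size_f uD onD (ltnW k_ge2).
  have rank_L : \rank (code_L D k) = k by rewrite mxrank_gen rank_k.
  by rewrite rank_L in upper *; lia.
Qed.
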